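(* Let $X$ be a metrizable space, $A$ a Hausdorff topological Abelian group, and $f:X\times I\to A$ a semi-layered function (case $p=1$). Then $F(x):=f(x,\cdot)$ defines a continuous map $F:X\to EA$, i.e. $F\in\mathcal{C}_{\mathrm{cts}}(X,EA)$.
   Context: Let $I=(0,1]$. $EA$ is the group of left-continuous step functions $I\to A$ with finitely many discontinuities, topologized as the direct limit of the subsets $E^{(n)}A$ (functions with at most $n$ discontinuities), where $E^{(n)}A$ is topologized as a quotient of $\Delta_n\times A^{n+1}$ ($\Delta_n$ the $n$-simplex, recording the jump positions and the values). A continuous dissection over $X$ is a family $\mathcal{F}$ of continuous functions $X\to[0,1]$ containing the constants $0,1$ which is locally finite (each point has a neighbourhood $U$ with $\{\xi|_U:\xi\in\mathcal{F}\}$ finite); l-complete means closed under pointwise max, min, and pointwise limits of convergent directed families. An $\mathcal{F}$-wedge is $\{(x,t):\xi_1(x)<t\le\xi_2(x)\}$ with $\xi_i\in\mathcal{F}$; minimal means nonempty and inclusion-minimal. With $\beta:X\times I\to X$ the projection, $f:X\times I\to A$ is semi-layered if for some l-complete continuous dissection $\mathcal{F}$, for every minimal $\mathcal{F}$-wedge $C$ there is a continuous $f_C:\overline{\beta(C)}\to A$ with $f|_C=f_C\circ\beta|_C$. *)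

From Stdlib Require Import Reals List.
Open Scope R_scope.

Definition is_topology {X : Type} (O : (X -> Prop) -> Prop) : Prop :=
  O (fun _ => True) /\
  (forall U V, O U -> O V -> O (fun x => U x /\ V x)) /\
  (forall Fam : (X -> Prop) -> Prop,
      (forall U, Fam U -> O U) -> O (fun x => exists U, Fam U /\ U x)) /\
  (forall U V, O U -> (forall x, U x <-> V x) -> O V).

Definition R_open (U : R -> Prop) : Prop :=
  forall x, U x -> exists eps, eps > 0 /\ forall y, Rabs (y - x) < eps -> U y.

Definition continuous {X Y : Type} (OX : (X -> Prop) -> Prop)
  (OY : (Y -> Prop) -> Prop) (g : X -> Y) : Prop :=
  forall V, OY V -> OX (fun x => V (g x)).

Definition continuous_on {X Y : Type} (OX : (X -> Prop) -> Prop)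
  (OY : (Y -> Prop) -> Prop) (S : X -> Prop) (g : X -> Y) : Prop :=
  forall V, OY V -> exists U, OX U /\ forall x, S x -> (U x <-> V (g x)).

Definition closure {X : Type} (OX : (X -> Prop) -> Prop) (S : X -> Prop) (x : X)
  : Prop :=
  forall U, OX U -> U x -> exists y, U y /\ S y.

Definition metrizable {X : Type} (OX : (X -> Prop) -> Prop) : Prop :=
  exists d : X -> X -> R,
    (forall x y, 0 <= d x y) /\
    (forall x y, d x y = 0 <-> x = y) /\
    (forall x y, d x y = d y x) /\
    (forall x y z, d x z <= d x y + d y z) /\
    (forall U, OX U <->
       forall x, U x -> exists eps, eps > 0 /\ forall y, d x y < eps -> U y).

Definition hausdorff {A : Type} (OA : (A -> Prop) -> Prop) : Prop :=
  forall a b, a <> b -> exists U V, OA U /\ OA V /\ U a /\ V b /\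
     forall c, U c -> V c -> False.

(* Hausdorff topological Abelian group (A, plus, opp, zero, OA).  Continuity
   of plus : A x A -> A w.r.t. the product topology is written out. *)
Definition hausdorff_top_abelian_group {A : Type} (plus : A -> A -> A)
  (opp : A -> A) (zero : A) (OA : (A -> Prop) -> Prop) : Prop :=
  is_topology OA /\ hausdorff OA /\
  (forall a b c, plus a (plus b c) = plus (plus a b) c) /\
  (forall a b, plus a b = plus b a) /\
  (forall a, plus a zero = a) /\
  (forall a, plus a (opp a) = zero) /\
  (forall W a b, OA W -> W (plus a b) ->
     exists U V, OA U /\ OA V /\ U a /\ V b /\
       forall a' b', U a' -> V b' -> W (plus a' b')) /\
  continuous OA OA opp.

(* Elements of EA are represented as functions R -> A which vanish (= zero)
   outside I = (0,1].  *)
Definition restrictI {A : Type} (zero : A) (g : R -> A) : R -> A :=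
  fun t => if Rlt_dec 0 t then (if Rle_dec t 1 then g t else zero) else zero.

(* Delta_n modelled as {(s_1,...,s_n) : 0 <= s_1 <= ... <= s_n <= 1}
   (coordinates s i, 1 <= i <= n, of s : nat -> R; other coordinates unused). *)
Definition in_simplex (n : nat) (s : nat -> R) : Prop :=
  (forall i, (1 <= i <= n)%nat -> 0 <= s i <= 1) /\
  (forall i, (1 <= i < n)%nat -> s i <= s (S i)).

Fixpoint nb_below (m : nat) (s : nat -> R) (t : R) : nat :=
  match m with
  | O => O
  | S k => (nb_below k s t + (if Rlt_dec (s (S k)) t then 1 else 0))%nat
  end.

(* The quotient map phi_n : Delta_n x A^(n+1) -> E^(n)A : jumps at s_1..s_n,
   value a_k on (s_k, s_(k+1)] (s_0 = 0, s_(n+1) = 1); left continuous. *)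
Definition phi {A : Type} (zero : A) (n : nat) (s : nat -> R) (a : nat -> A)
  : R -> A :=
  restrictI zero (fun t => a (nb_below n s t)).

Definition in_EA {A : Type} (zero : A) (g : R -> A) : Prop :=
  exists n s a, in_simplex n s /\ forall t, g t = phi zero n s a t.

(* P is open in Delta_n x A^(n+1) (product of the subspace topology of
   Delta_n in R^n with the product topology of A^(n+1)). *)
Definition open_simplex_prod {A : Type} (OA : (A -> Prop) -> Prop) (n : nat)
  (P : (nat -> R) -> (nat -> A) -> Prop) : Prop :=
  forall s a, in_simplex n s -> P s a ->
    exists eps (V : nat -> A -> Prop), eps > 0 /\
      (forall i, (i <= n)%nat -> OA (V i) /\ V i (a i)) /\
      forall s' a', in_simplex n s' ->
        (forall i, (1 <= i <= n)%nat -> Rabs (s' i - s i) < eps) ->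
        (forall i, (i <= n)%nat -> V i (a' i)) -> P s' a'.

(* Open subsets of EA for the direct limit topology of the quotient topologies
   on the E^(n)A: U is open iff phi_n^{-1}(U) is open for every n. *)
Definition EA_open {A : Type} (zero : A) (OA : (A -> Prop) -> Prop)
  (U : (R -> A) -> Prop) : Prop :=
  forall n, open_simplex_prod OA n (fun s a => U (phi zero n s a)).

Definition continuous_dissection {X : Type} (OX : (X -> Prop) -> Prop)
  (F : (X -> R) -> Prop) : Prop :=
  (forall xi, F xi -> continuous OX R_open xi /\ forall x, 0 <= xi x <= 1) /\
  F (fun _ => 0) /\ F (fun _ => 1) /\
  (forall x, exists U, OX U /\ U x /\
     exists L : list (X -> R), forall xi, F xi ->
       exists eta, In eta L /\ forall y, U y -> xi y = eta y).

Definition l_complete {X : Type} (F : (X -> R) -> Prop) : Prop :=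
  (forall xi eta, F xi -> F eta -> F (fun x => Rmax (xi x) (eta x))) /\
  (forall xi eta, F xi -> F eta -> F (fun x => Rmin (xi x) (eta x))) /\
  (forall (L : Type) (le : L -> L -> Prop) (net : L -> X -> R) (g : X -> R),
     inhabited L ->
     (forall l, le l l) ->
     (forall l1 l2 l3, le l1 l2 -> le l2 l3 -> le l1 l3) ->
     (forall l1 l2, exists l3, le l1 l3 /\ le l2 l3) ->
     (forall l, F (net l)) ->
     (forall x eps, eps > 0 -> exists l0, forall l, le l0 l ->
         Rabs (net l x - g x) < eps) ->
     F g).

Definition wedge {X : Type} (xi1 xi2 : X -> R) (x : X) (t : R) : Prop :=
  xi1 x < t <= xi2 x.

Definition minimal_wedge {X : Type} (F : (X -> R) -> Prop) (xi1 xi2 : X -> R)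
  : Prop :=
  (exists x t, wedge xi1 xi2 x t) /\
  forall eta1 eta2, F eta1 -> F eta2 ->
    (exists x t, wedge eta1 eta2 x t) ->
    (forall x t, wedge eta1 eta2 x t -> wedge xi1 xi2 x t) ->
    forall x t, wedge xi1 xi2 x t -> wedge eta1 eta2 x t.

Definition wedge_proj {X : Type} (xi1 xi2 : X -> R) (x : X) : Prop :=
  exists t, wedge xi1 xi2 x t.

Definition semi_layered {X A : Type} (OX : (X -> Prop) -> Prop)
  (OA : (A -> Prop) -> Prop) (f : X -> R -> A) : Prop :=
  exists F : (X -> R) -> Prop,
    continuous_dissection OX F /\ l_complete F /\
    forall xi1 xi2, F xi1 -> F xi2 -> minimal_wedge F xi1 xi2 ->
      exists fC : X -> A,
        continuous_on OX OA (closure OX (wedge_proj xi1 xi2)) fC /\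
        forall x t, wedge xi1 xi2 x t -> f x t = fC x.

Definition curryEA {X A : Type} (zero : A) (f : X -> R -> A) (x : X) : R -> A :=
  restrictI zero (f x).

From Stdlib Require Import Reals Arith Lra Lia Classical ClassicalEpsilon
  FunctionalExtensionality List.
Open Scope R_scope.

(* Fix x ∈ X and a neighbourhood W of x on which the dissection F takes only
   finitely many values (local finiteness).  Call a chain a finite sequence
   0 = h_0 ≤ h_1 ≤ … ≤ h_(n+1) = 1 of members of F, ordered on W and strictly
   increasing at some point of W at each step.  The length of a chain is
   bounded by the number of values of F on W, so there is a chain of maximal
   length.  Maximality forces every ξ ∈ F to lie, on the part of W where
   h_i < h_(i+1), either entirely below h_i or entirely above h_(i+1); using
   l-completeness (sups and infs of directed subfamilies lie in F) this yields
   a minimal F-wedge containing that part of the wedge (h_i, h_(i+1)].  On it f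
   is a function of x continuous on the closure, which gives a layer value a_i
   continuous at x.  Thus on W
       f(y,·) = φ_n(h_1(y),…,h_n(y); a_0(y),…,a_n(y)),
   with the h_j continuous and the a_i continuous at x.  Both claims follow:
   f(x,·) ∈ E^(n)A, and the preimage of an open U ⊆ EA is a neighbourhood of
   each of its points because φ_n⁻¹(U) is open in Δ_n × A^(n+1). *)

Definition continuous_at {X Y : Type} (OX : (X -> Prop) -> Prop)
  (OY : (Y -> Prop) -> Prop) (g : X -> Y) (x : X) : Prop :=
  forall V, OY V -> V (g x) -> exists O, OX O /\ O x /\ forall y, O y -> V (g y).

Definition glue {X Y : Type} (S : X -> Prop) (g : X -> Y) (c : Y) (y : X) : Y :=
  if excluded_middle_informative (S y) then g y else c.

Section Topology.

Context {X : Type}.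
Variable OX : (X -> Prop) -> Prop.
Hypothesis HX : is_topology OX.

Lemma open_of_nbhds (P : X -> Prop) :
  (forall x, P x -> exists O, OX O /\ O x /\ forall y, O y -> P y) -> OX P.
Proof.
  intros Hloc. destruct HX as [_ [_ [Hunion Hext]]].
  apply (Hext (fun x => exists O, (OX O /\ forall y, O y -> P y) /\ O x)).
  - apply Hunion. intros O [HO _]; exact HO.
  - intro x; split.
    + intros [O [[_ HOP] Ox]]; auto.
    + intros Px. destruct (Hloc x Px) as [O [HO [Ox HOP]]]. exists O; auto.
Qed.

Lemma nbhd_finite_inter (x : X) (P : nat -> X -> Prop) (n : nat) :
  (forall i, (i <= n)%nat -> exists O, OX O /\ O x /\ forall y, O y -> P i y) ->
  exists O, OX O /\ O x /\ forall y, O y -> forall i, (i <= n)%nat -> P i y.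
Proof.
  destruct HX as [_ [Hint _]].
  induction n as [|n IH]; intros H.
  - destruct (H 0%nat (le_n 0)) as [O [HO [Ox HOP]]]. exists O; repeat split; auto.
    intros y Oy i Hi. replace i with 0%nat by lia. auto.
  - destruct IH as [O1 [HO1 [O1x HO1P]]]. { intros i Hi; apply H; lia. }
    destruct (H (S n) (le_n _)) as [O2 [HO2 [O2x HO2P]]].
    exists (fun y => O1 y /\ O2 y); repeat split; auto.
    intros y [O1y O2y] i Hi. destruct (Nat.eq_dec i (S n)) as [->|]; auto.
    apply HO1P; auto; lia.
Qed.

Lemma subset_closure (S : X -> Prop) (y : X) : S y -> closure OX S y.
Proof. intros Sy U _ Uy. exists y; auto. Qed.

Lemma closure_complement_nbhd (S : X -> Prop) (z : X) :
  ~ closure OX S z -> exists N, OX N /\ N z /\ forall y, N y -> ~ closure OX S y.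
Proof.
  intros Hz. apply NNPP; intro Hno. apply Hz. intros U HU Uz.
  apply NNPP; intro Hne. apply Hno. exists U. split; [exact HU|split; [exact Uz|]].
  intros y Uy Cy. destruct (Cy U HU Uy) as [w [Uw Sw]]. apply Hne; eauto.
Qed.

Lemma glue_continuous_at {Y : Type} (OY : (Y -> Prop) -> Prop)
  (S : X -> Prop) (g : X -> Y) (c0 : Y) (x : X) :
  continuous_on OX OY (closure OX S) g ->
  let c := glue (closure OX S) g c0 x in
  continuous_at OX OY (glue (closure OX S) g c) x.
Proof.
  intros Hg c V HV Vx. unfold glue in Vx at 1.
  destruct (excluded_middle_informative (closure OX S x)) as [Cx|Cx].
  - destruct (Hg V HV) as [O [HO HOV]].
    assert (Vc : V c) by (unfold c, glue; destruct excluded_middle_informative; tauto).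
    exists O. repeat split; [exact HO|now apply HOV|].
    intros y Oy. unfold glue. destruct excluded_middle_informative as [Cy|Cy]; auto.
    now apply HOV.
  - destruct (closure_complement_nbhd S x Cx) as [N [HN [Nx HNC]]].
    exists N. repeat split; auto. intros y Ny. unfold glue.
    destruct excluded_middle_informative as [Cy|]; [exfalso; exact (HNC y Ny Cy)|exact Vx].
Qed.

End Topology.

Lemma ball_open (c eps : R) : R_open (fun r => Rabs (r - c) < eps).
Proof.
  intros r Hr. exists (eps - Rabs (r - c)). split; [lra|]. intros z Hz.
  assert (Rabs (z - c) <= Rabs (z - r) + Rabs (r - c)).
  { replace (z - c) with ((z - r) + (r - c)) by ring. apply Rabs_triang. }
  lra.
Qed.

(* The reflection ξ ↦ 1 - ξ, exchanging sups and infs of families in [0,1]. *)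
Definition mirror {X : Type} (xi : X -> R) : X -> R := fun x => 1 - xi x.

Lemma mirror_involutive {X : Type} (xi : X -> R) : mirror (mirror xi) = xi.
Proof. apply functional_extensionality; intro x; unfold mirror; ring. Qed.

Lemma mirror_Rmax {X : Type} (xi eta : X -> R) :
  mirror (fun x => Rmax (xi x) (eta x)) = fun x => Rmin (mirror xi x) (mirror eta x).
Proof.
  apply functional_extensionality; intro x; unfold mirror, Rmax, Rmin.
  repeat destruct Rle_dec; lra.
Qed.

Lemma mirror_Rmin {X : Type} (xi eta : X -> R) :
  mirror (fun x => Rmin (xi x) (eta x)) = fun x => Rmax (mirror xi x) (mirror eta x).
Proof.
  apply functional_extensionality; intro x; unfold mirror, Rmax, Rmin.
  repeat destruct Rle_dec; lra.
Qed.

Lemma l_complete_mirror {X : Type} (F : (X -> R) -> Prop) :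
  l_complete F -> l_complete (fun xi => F (mirror xi)).
Proof.
  intros [Hmax [Hmin Hnet]]. split; [|split].
  - intros xi eta Hxi Heta. rewrite mirror_Rmax. now apply Hmin.
  - intros xi eta Hxi Heta. rewrite mirror_Rmin. now apply Hmax.
  - intros L le net g HLi Hrefl Htrans Hdir HF Hconv.
    apply (Hnet L le (fun l => mirror (net l)) (mirror g)); auto.
    intros x eps Heps. destruct (Hconv x eps Heps) as [l0 Hl0].
    exists l0. intros l Hl. unfold mirror.
    replace (1 - net l x - (1 - g x)) with (- (net l x - g x)) by ring.
    rewrite Rabs_Ropp. auto.
Qed.

(* A nonempty subfamily of F closed under max has its pointwise supremum in F
   (it is the limit of the subfamily viewed as an increasing net). *)
Lemma l_complete_sup {X : Type} (F : (X -> R) -> Prop) (HL : l_complete F)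
  (Hub : forall xi, F xi -> forall x, xi x <= 1)
  (P : (X -> R) -> Prop) (HPF : forall xi, P xi -> F xi)
  (HPmax : forall a b, P a -> P b -> P (fun x => Rmax (a x) (b x)))
  (p0 : X -> R) (Hp0 : P p0) :
  exists g, F g /\ (forall xi, P xi -> forall x, xi x <= g x) /\
    (forall x M, (forall xi, P xi -> xi x <= M) -> g x <= M).
Proof.
  assert (Hc : forall x, {m | is_lub (fun r => exists xi, P xi /\ r = xi x) m}).
  { intro x. apply completeness.
    - exists 1. intros r [xi [Hxi ->]]. exact (Hub xi (HPF _ Hxi) x).
    - exists (p0 x), p0; auto. }
  set (g := fun x => proj1_sig (Hc x)).
  assert (Hg : forall x, is_lub (fun r => exists xi, P xi /\ r = xi x) (g x))
    by (intro x; exact (proj2_sig (Hc x))).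
  exists g. split; [|split].
  - destruct HL as [_ [_ Hnet]].
    apply (Hnet {xi | P xi} (fun a b => forall x, proj1_sig a x <= proj1_sig b x)
             (fun l => proj1_sig l) g).
    + constructor. exists p0; auto.
    + intros l x; lra.
    + intros l1 l2 l3 H12 H23 x. specialize (H12 x); specialize (H23 x); lra.
    + intros [a Ha] [b Hb]. exists (exist _ _ (HPmax a b Ha Hb)).
      split; intro x; [apply Rmax_l|apply Rmax_r].
    + intros [a Ha]; simpl; auto.
    + intros x eps Heps.
      destruct (classic (exists xi, P xi /\ g x - eps < xi x)) as [[xi [Hxi Hlt]]|Hno].
      * exists (exist _ xi Hxi). intros [l Hl] Hle. simpl in *. specialize (Hle x).
        assert (l x <= g x) by (apply (proj1 (Hg x)); exists l; auto).
        apply Rabs_def1; lra.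
      * exfalso. assert (g x <= g x - eps); [|lra].
        apply (proj2 (Hg x)). intros r [xi [Hxi ->]].
        apply Rnot_lt_le. intro. apply Hno. exists xi; auto.
  - intros xi Hxi x. apply (proj1 (Hg x)). exists xi; auto.
  - intros x M HM. apply (proj2 (Hg x)). intros r [xi [Hxi ->]]. auto.
Qed.

Lemma l_complete_inf {X : Type} (F : (X -> R) -> Prop) (HL : l_complete F)
  (Hlb : forall xi, F xi -> forall x, 0 <= xi x)
  (P : (X -> R) -> Prop) (HPF : forall xi, P xi -> F xi)
  (HPmin : forall a b, P a -> P b -> P (fun x => Rmin (a x) (b x)))
  (p0 : X -> R) (Hp0 : P p0) :
  exists g, F g /\ (forall xi, P xi -> forall x, g x <= xi x) /\
    (forall x M, (forall xi, P xi -> M <= xi x) -> M <= g x).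
Proof.
  destruct (l_complete_sup (fun xi => F (mirror xi)) (l_complete_mirror F HL))
    with (P := fun xi => P (mirror xi)) (p0 := mirror p0)
    as [g [Fg [Hup Hleast]]].
  - intros xi Fxi x. pose proof (Hlb _ Fxi x) as H. unfold mirror in H. lra.
  - auto.
  - intros a b Pa Pb. rewrite mirror_Rmax. now apply HPmin.
  - now rewrite mirror_involutive.
  - exists (mirror g). split; [exact Fg|split].
    + intros xi Pxi x. rewrite <- (mirror_involutive xi) in Pxi.
      pose proof (Hup _ Pxi x) as H. unfold mirror in *. lra.
    + intros x M HM. assert (g x <= 1 - M); [|unfold mirror; lra].
      apply Hleast. intros xi Pxi. specialize (HM _ Pxi). unfold mirror in HM. lra.
Qed.

Lemma bounded_nat_max (P : nat -> Prop) (B : nat) :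
  (forall k, P k -> (k <= B)%nat) -> (exists k, P k) ->
  exists k, P k /\ forall k', P k' -> (k' <= k)%nat.
Proof.
  revert P. induction B as [|B IH]; intros P HB [k0 Hk0].
  - exists k0; split; [exact Hk0|]. intros k' Hk'. pose proof (HB _ Hk'); lia.
  - destruct (classic (P (S B))) as [HS|HS].
    + exists (S B); split; auto.
    + apply IH; [|eauto]. intros k Hk. pose proof (HB _ Hk).
      destruct (Nat.eq_dec k (S B)) as [->|]; [contradiction|lia].
Qed.

Fixpoint count_sat {T : Type} (Q : T -> Prop) (l : list T) : nat :=
  match l with
  | nil => 0%nat
  | e :: l' => ((if excluded_middle_informative (Q e) then 1 else 0) + count_sat Q l')%nat
  end.

Lemma count_sat_le_length {T : Type} (Q : T -> Prop) (l : list T) :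
  (count_sat Q l <= length l)%nat.
Proof. induction l; simpl; [lia|]. destruct excluded_middle_informative; lia. Qed.

Lemma count_sat_mono {T : Type} (Q1 Q2 : T -> Prop) (l : list T) :
  (forall e, Q1 e -> Q2 e) -> (count_sat Q1 l <= count_sat Q2 l)%nat.
Proof.
  intro H; induction l as [|a l IH]; simpl; [lia|].
  destruct (excluded_middle_informative (Q1 a)), (excluded_middle_informative (Q2 a));
    try lia. exfalso; auto.
Qed.

Lemma count_sat_strict {T : Type} (Q1 Q2 : T -> Prop) (l : list T) (e : T) :
  (forall e0, Q1 e0 -> Q2 e0) -> In e l -> Q2 e -> ~ Q1 e ->
  (count_sat Q1 l < count_sat Q2 l)%nat.
Proof.
  intros H Hin H2 H1; induction l as [|a l IH]; simpl; [destruct Hin|].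
  destruct Hin as [->|Hin].
  - pose proof (count_sat_mono Q1 Q2 l H).
    destruct (excluded_middle_informative (Q1 e)); [contradiction|].
    destruct (excluded_middle_informative (Q2 e)); [lia|contradiction].
  - specialize (IH Hin).
    destruct (excluded_middle_informative (Q1 a)), (excluded_middle_informative (Q2 a));
      try lia. exfalso; auto.
Qed.

Lemma nb_below_locate (m : nat) (s : nat -> R) (t : R) :
  (forall j, (j <= m)%nat -> s j <= s (S j)) -> s 0%nat < t -> t <= s (S m) ->
  exists i, (i <= m)%nat /\ s i < t <= s (S i) /\ nb_below m s t = i.
Proof.
  intros Hmono H0 Hm.
  assert (Hle : forall j j', (j <= j' <= S m)%nat -> s j <= s j').
  { intros j j' Hjj. induction j' as [|j' IH].
    - replace j with 0%nat by lia; lra.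
    - destruct (Nat.eq_dec j (S j')) as [->|]; [lra|].
      pose proof (Hmono j' ltac:(lia)). specialize (IH ltac:(lia)). lra. }
  destruct (bounded_nat_max (fun i => (i <= S m)%nat /\ s i < t) (S m))
    as [i [[Hi Hit] Himax]]; [intros k [Hk _]; exact Hk|exists 0%nat; split; [lia|lra]|].
  assert (Him : (i <= m)%nat).
  { destruct (Nat.eq_dec i (S m)) as [->|]; [lra|lia]. }
  assert (HSi : t <= s (S i)).
  { apply Rnot_lt_le. intro Hc.
    assert (HSm : (S i <= S m)%nat) by lia. specialize (Himax (S i) (conj HSm Hc)). lia. }
  exists i. split; [exact Him|split; [lra|]].
  assert (Hcount : forall k, (k <= m)%nat -> nb_below k s t = Nat.min k i).
  { induction k as [|k IH]; intros Hk; cbn [nb_below]; [reflexivity|].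
    rewrite IH by lia. destruct (Rlt_dec (s (S k)) t) as [Hl|Hl].
    - assert (S k <= i)%nat; [|lia].
      apply Nat.nlt_ge. intro Hc. pose proof (Hle (S i) (S k) ltac:(lia)). lra.
    - assert (~ (S k <= i)%nat); [|lia].
      intro Hc. pose proof (Hle (S k) i ltac:(lia)). lra. }
  rewrite Hcount by lia. lia.
Qed.

Lemma clamp_bounds (a l u : R) : l <= u -> l <= Rmin (Rmax a l) u <= u.
Proof. unfold Rmin, Rmax. repeat destruct Rle_dec; lra. Qed.

Lemma clamp_low (a l u : R) : l < u -> Rmin (Rmax a l) u <= l -> a <= l.
Proof. unfold Rmin, Rmax. repeat destruct Rle_dec; lra. Qed.

Lemma clamp_high (a l u : R) : l < u -> u <= Rmin (Rmax a l) u -> u <= a.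
Proof. unfold Rmin, Rmax. repeat destruct Rle_dec; lra. Qed.

Section Chains.

Context {X : Type}.
Variables (F : (X -> R) -> Prop) (W : X -> Prop).

Definition chain (k : nat) (h : nat -> X -> R) : Prop :=
  (forall j, (j <= k)%nat -> F (h j)) /\
  (forall y, W y -> h 0%nat y = 0 /\ h k y = 1) /\
  (forall j, (j < k)%nat -> (forall y, W y -> h j y <= h (S j) y) /\
                            exists y, W y /\ h j y < h (S j) y).

Definition tight_step (lo hi : X -> R) : Prop :=
  forall xi, F xi ->
    (forall y, W y -> lo y < hi y -> xi y <= lo y) \/
    (forall y, W y -> lo y < hi y -> hi y <= xi y).

(* If F takes only the values in L on W, a chain is no longer than L: the
   number of elements of L below h j on W increases strictly with j. *)
Lemma chain_bound (L : list (X -> R))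
  (Hfin : forall xi, F xi -> exists eta, In eta L /\ forall y, W y -> xi y = eta y)
  (k : nat) (h : nat -> X -> R) : chain k h -> (k <= length L)%nat.
Proof.
  intros [HF [_ Hstep]].
  set (c := fun j => count_sat (fun eta : X -> R => forall y, W y -> eta y <= h j y) L).
  assert (Hc : forall j, (j <= k)%nat -> (j <= c j)%nat).
  { induction j as [|j IH]; intros Hj; [lia|].
    assert (c j < c (S j))%nat; [|specialize (IH ltac:(lia)); lia].
    destruct (Hstep j ltac:(lia)) as [Hle [y0 [Wy0 Hlt]]].
    destruct (Hfin (h (S j)) (HF (S j) Hj)) as [eta [Hin Heta]].
    apply (count_sat_strict _ _ L eta).
    - intros e He y Wy. specialize (He y Wy). specialize (Hle y Wy). lra.
    - exact Hin.
    - intros y Wy. rewrite <- (Heta y Wy). lra.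
    - intros Hc. specialize (Hc y0 Wy0). rewrite <- (Heta y0 Wy0) in Hc. lra. }
  pose proof (Hc k (le_n k)).
  pose proof (count_sat_le_length (fun eta : X -> R => forall y, W y -> eta y <= h k y) L).
  unfold c in *. lia.
Qed.

Lemma chain_insert (k : nat) (h : nat -> X -> R) (i : nat) (c : X -> R) :
  chain k h -> (i < k)%nat -> F c ->
  (forall y, W y -> h i y <= c y <= h (S i) y) ->
  (exists y, W y /\ h i y < c y) -> (exists y, W y /\ c y < h (S i) y) ->
  chain (S k) (fun j => if le_lt_dec j i then h j
                        else if Nat.eq_dec j (S i) then c else h (pred j)).
Proof.
  intros [HF [Hend Hstep]] Hik Fc Hbtw Hlo Hhi. split; [|split].
  - intros j Hj. destruct (le_lt_dec j i); [apply HF; lia|].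
    destruct (Nat.eq_dec j (S i)); [exact Fc|apply HF; lia].
  - intros y Wy. destruct (le_lt_dec 0 i); [|lia]. destruct (le_lt_dec (S k) i); [lia|].
    destruct (Nat.eq_dec (S k) (S i)); [lia|]. apply Hend; auto.
  - intros j Hj. destruct (le_lt_dec j i) as [H1|H1].
    + destruct (le_lt_dec (S j) i) as [H2|H2]; [apply Hstep; lia|].
      replace j with i by lia. destruct (Nat.eq_dec (S i) (S i)) as [_|]; [|lia].
      split; [intros y Wy; apply Hbtw; auto|exact Hlo].
    + destruct (le_lt_dec (S j) i); [lia|]. destruct (Nat.eq_dec j (S i)) as [->|E].
      * destruct (Nat.eq_dec (S (S i)) (S i)); [lia|]. simpl. split.
        { intros y Wy; apply Hbtw; auto. }
        destruct Hhi as [y [Wy Hy]]; exists y; split; auto.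
      * destruct (Nat.eq_dec (S j) (S i)); [lia|].
        destruct j as [|j']; [lia|]. simpl. apply Hstep; lia.
Qed.

Lemma maximal_chain_exists (L : list (X -> R))
  (Hfin : forall xi, F xi -> exists eta, In eta L /\ forall y, W y -> xi y = eta y)
  (F0 : F (fun _ => 0)) (F1 : F (fun _ => 1)) (x : X) (Wx : W x) :
  exists n h, chain (S n) h /\ forall m h', chain (S m) h' -> (m <= n)%nat.
Proof.
  destruct (bounded_nat_max (fun m => exists h, chain (S m) h) (length L))
    as [n [[h Hh] Hmax]].
  - intros m [h Hh]. pose proof (chain_bound L Hfin _ _ Hh). lia.
  - exists 0%nat, (fun j => if Nat.eq_dec j 0 then (fun _ => 0) else (fun _ => 1)).
    split; [|split].
    + intros j Hj. destruct (Nat.eq_dec j 0); auto.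
    + intros y Wy. simpl. auto.
    + intros j Hj. replace j with 0%nat by lia. simpl.
      split; [intros; lra|exists x; split; auto; lra].
  - exists n, h. split; [exact Hh|]. intros m h' Hh'. apply Hmax. eauto.
Qed.

(* Each step of a maximal chain is tight: a member of F strictly inside the
   step could be clamped into it and inserted, lengthening the chain. *)
Lemma maximal_chain_tight
  (Hmax : forall xi eta, F xi -> F eta -> F (fun x => Rmax (xi x) (eta x)))
  (Hmin : forall xi eta, F xi -> F eta -> F (fun x => Rmin (xi x) (eta x)))
  (n : nat) (h : nat -> X -> R) (Hch : chain (S n) h)
  (Hmaxn : forall m h', chain (S m) h' -> (m <= n)%nat)
  (i : nat) : (i <= n)%nat -> tight_step (h i) (h (S i)).
Proof.
  intros Hi xi Fxi. pose proof Hch as [HhF [_ Hhstep]].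
  set (c := fun y => Rmin (Rmax (xi y) (h i y)) (h (S i) y)).
  assert (Fc : F c) by (apply Hmin; [apply Hmax|]; auto; apply HhF; lia).
  assert (Hbtw : forall y, W y -> h i y <= c y <= h (S i) y).
  { intros y Wy. apply clamp_bounds. apply (Hhstep i ltac:(lia)). exact Wy. }
  destruct (classic (exists y, W y /\ h i y < c y)) as [Hlo|Hlo].
  - destruct (classic (exists y, W y /\ c y < h (S i) y)) as [Hhi|Hhi].
    + exfalso.
      pose proof (chain_insert (S n) h i c Hch ltac:(lia) Fc Hbtw Hlo Hhi) as Hc2.
      specialize (Hmaxn (S n) _ Hc2). lia.
    + right. intros y Wy Hlt. apply (clamp_high (xi y) (h i y)); [exact Hlt|].
      apply Rnot_lt_le. intro. apply Hhi. eauto.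
  - left. intros y Wy Hlt. apply (clamp_low (xi y) (h i y) (h (S i) y)); [exact Hlt|].
    apply Rnot_lt_le. intro. apply Hlo. eauto.
Qed.

End Chains.

Section Layers.

Context {X A : Type}.
Variables (OX : (X -> Prop) -> Prop) (OA : (A -> Prop) -> Prop).
Variables (F : (X -> R) -> Prop) (W : X -> Prop) (f : X -> R -> A).
Hypothesis HL : l_complete F.
Hypothesis Hbound : forall xi, F xi -> forall x, 0 <= xi x <= 1.
Hypothesis Hlayered : forall xi1 xi2, F xi1 -> F xi2 -> minimal_wedge F xi1 xi2 ->
  exists fC : X -> A,
    continuous_on OX OA (closure OX (wedge_proj xi1 xi2)) fC /\
    forall x t, wedge xi1 xi2 x t -> f x t = fC x.

(* A tight step (lo, hi], nonempty at y0 ∈ W, lies on W inside a minimal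
   F-wedge: the one between Lo = sup {ξ ∈ F : ξ y0 < hi y0} and
   Hi = inf {ξ ∈ F : hi y0 <= ξ y0}.  Every member of F is below Lo or above
   Hi, so no F-wedge fits strictly inside (Lo, Hi]. *)
Lemma tight_step_minimal_wedge (lo hi : X -> R) (Flo : F lo) (Fhi : F hi)
  (Htight : tight_step F W lo hi) (y0 : X) (Wy0 : W y0) (Hy0 : lo y0 < hi y0) :
  exists Lo Hi, F Lo /\ F Hi /\ minimal_wedge F Lo Hi /\
    forall y t, W y -> lo y < t <= hi y -> wedge Lo Hi y t.
Proof.
  pose proof HL as [Hmax [Hmin _]].
  set (t0 := hi y0).
  destruct (l_complete_sup F HL (fun xi H x => proj2 (Hbound xi H x))
              (fun xi => F xi /\ xi y0 < t0)) with (p0 := lo)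
    as [Lo [FLo [HLo_up HLo_least]]].
  { intros xi [Fxi _]; exact Fxi. }
  { intros a b [Fa Ha] [Fb Hb]. split; [apply Hmax; auto|apply Rmax_lub_lt; auto]. }
  { split; [exact Flo|unfold t0; lra]. }
  destruct (l_complete_inf F HL (fun xi H x => proj1 (Hbound xi H x))
              (fun xi => F xi /\ t0 <= xi y0)) with (p0 := hi)
    as [Hi [FHi [HHi_low HHi_greatest]]].
  { intros xi [Fxi _]; exact Fxi. }
  { intros a b [Fa Ha] [Fb Hb]. split; [apply Hmin; auto|apply Rmin_glb; auto]. }
  { split; [exact Fhi|unfold t0; lra]. }
  assert (HLo : forall y, W y -> lo y < hi y -> Lo y <= lo y).
  { intros y Wy Hy. apply HLo_least. intros xi [Fxi Hxi].
    destruct (Htight xi Fxi) as [H|H]; [now apply H|].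
    specialize (H y0 Wy0 Hy0). unfold t0 in Hxi. lra. }
  assert (HHi : forall y, W y -> lo y < hi y -> hi y <= Hi y).
  { intros y Wy Hy. apply HHi_greatest. intros xi [Fxi Hxi].
    destruct (Htight xi Fxi) as [H|H]; [|now apply H].
    specialize (H y0 Wy0 Hy0). unfold t0 in Hxi. lra. }
  exists Lo, Hi. split; [exact FLo|split; [exact FHi|split]].
  - split.
    + exists y0, t0. specialize (HLo y0 Wy0 Hy0). specialize (HHi y0 Wy0 Hy0).
      unfold wedge, t0 in *; lra.
    + intros e1 e2 Fe1 Fe2 [x' [t' Hw']] Hsub x1 t1 Hw1.
      pose proof (Hsub x' t' Hw') as Hw''. unfold wedge in *.
      destruct (Rlt_le_dec (e1 y0) t0) as [He1|He1].
      * pose proof (HLo_up e1 (conj Fe1 He1) x1).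
        destruct (Rlt_le_dec (e2 y0) t0) as [He2|He2].
        -- pose proof (HLo_up e2 (conj Fe2 He2) x'). lra.
        -- pose proof (HHi_low e2 (conj Fe2 He2) x1). lra.
      * pose proof (HHi_low e1 (conj Fe1 He1) x'). lra.
  - intros y t Wy Ht. pose proof (HLo y Wy ltac:(lra)). pose proof (HHi y Wy ltac:(lra)).
    unfold wedge. lra.
Qed.

Lemma tight_step_layer (Htop : OX (fun _ => True)) (zero : A)
  (lo hi : X -> R) (Flo : F lo) (Fhi : F hi) (Htight : tight_step F W lo hi) (x : X) :
  exists a : X -> A, continuous_at OX OA a x /\
    forall y t, W y -> lo y < t <= hi y -> f y t = a y.
Proof.
  destruct (classic (exists y0, W y0 /\ lo y0 < hi y0)) as [[y0 [Wy0 Hy0]]|Hempty].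
  - destruct (tight_step_minimal_wedge lo hi Flo Fhi Htight y0 Wy0 Hy0)
      as [Lo [Hi [FLo [FHi [Hminw Hstep]]]]].
    destruct (Hlayered Lo Hi FLo FHi Hminw) as [fC [HfC Hf]].
    set (S := wedge_proj Lo Hi).
    exists (glue (closure OX S) fC (glue (closure OX S) fC zero x)).
    split; [exact (glue_continuous_at OX OA S fC zero x HfC)|].
    intros y t Wy Ht. pose proof (Hstep y t Wy Ht) as Hw.
    unfold glue. destruct excluded_middle_informative as [_|HnC]; [now apply Hf|].
    exfalso. apply HnC, subset_closure. exists t; exact Hw.
  - exists (fun _ => zero). split.
    + intros V _ Vz. exists (fun _ => True). auto.
    + intros y t Wy Ht. exfalso. apply Hempty. exists y. split; [exact Wy|lra].
Qed.

End Layers.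

Section Representation.

Context {X A : Type}.
Variables (OX : (X -> Prop) -> Prop) (OA : (A -> Prop) -> Prop).
Variables (zero : A) (f : X -> R -> A).
Hypothesis HX : is_topology OX.
Hypothesis Hf : semi_layered OX OA f.

(* Near each point x, f(y,·) = φ_n(s y; a y) with jump positions s y
   depending continuously on y and layer values a y continuous at x: the
   jumps are the members of a maximal chain, the values the layer values of
   its (tight) steps. *)
Lemma local_layer_representation (x : X) :
  exists n (s : X -> nat -> R) (a : X -> nat -> A) W,
    OX W /\ W x /\
    (forall y, W y -> in_simplex n (s y) /\ curryEA zero f y = phi zero n (s y) (a y)) /\
    (forall j, (j <= n)%nat -> continuous OX R_open (fun y => s y j)) /\
    (forall i, (i <= n)%nat -> continuous_at OX OA (fun y => a y i) x).
Proof.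
  destruct Hf as [F [[Hcont [F0 [F1 Hlf]]] [HL Hlayered]]].
  pose proof HL as [Hmax [Hmin _]].
  assert (Hbound : forall xi, F xi -> forall x, 0 <= xi x <= 1)
    by (intros; apply Hcont; auto).
  destruct (Hlf x) as [W [HW [Wx [L Hfin]]]].
  destruct (maximal_chain_exists F W L Hfin F0 F1 x Wx) as [n [h [Hch Hmaxn]]].
  pose proof Hch as [HhF [Hhend Hhstep]].
  assert (Hlayer : forall i, exists a : X -> A, (i <= n)%nat ->
    continuous_at OX OA a x /\ forall y t, W y -> h i y < t <= h (S i) y -> f y t = a y).
  { intro i. destruct (le_lt_dec i n) as [Hi|Hi]; [|exists (fun _ => zero); lia].
    destruct (tight_step_layer OX OA F W f HL Hbound Hlayered (proj1 HX) zero
                (h i) (h (S i)) (HhF i ltac:(lia)) (HhF (S i) ltac:(lia))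
                (maximal_chain_tight F W Hmax Hmin n h Hch Hmaxn i Hi) x) as [a Ha].
    exists a; auto. }
  destruct (choice _ Hlayer) as [a Ha].
  exists n, (fun y j => h j y), (fun y i => a i y), W.
  split; [exact HW|split; [exact Wx|split; [|split]]].
  - intros y Wy.
    assert (Hmono : forall j, (j <= n)%nat -> h j y <= h (S j) y)
      by (intros j Hj; apply (Hhstep j); [lia|exact Wy]).
    split.
    + split; [intros j Hj; apply Hbound, HhF; lia|intros j Hj; apply Hmono; lia].
    + apply functional_extensionality; intro t. unfold curryEA, phi, restrictI.
      destruct (Rlt_dec 0 t) as [Ht0|]; [|reflexivity].
      destruct (Rle_dec t 1) as [Ht1|]; [|reflexivity].
      destruct (Hhend y Wy) as [E0 E1].
      destruct (nb_below_locate n (fun j => h j y) t Hmono) as [i [Hi [Ht ->]]];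
        [rewrite E0; lra|rewrite E1; lra|].
      now apply (proj2 (Ha i Hi)).
  - intros j Hj. apply Hcont, HhF; lia.
  - intros i Hi. apply (Ha i Hi).
Qed.

(* The preimage of an open subset of EA under y ↦ f(y,·) is a neighbourhood
   of each of its points: near x, f(y,·) is φ_n of data close to that of x. *)
Lemma curry_preimage_nbhd (U : (R -> A) -> Prop) (HU : EA_open zero OA U) (x : X) :
  U (curryEA zero f x) -> exists O, OX O /\ O x /\ forall y, O y -> U (curryEA zero f y).
Proof.
  intros Hx. pose proof HX as [_ [Hint _]].
  destruct (local_layer_representation x) as [n [s [a [W [HW [Wx [Hrep [Hs Ha]]]]]]]].
  destruct (Hrep x Wx) as [Hsx Heqx]. rewrite Heqx in Hx.
  destruct (HU n (s x) (a x) Hsx Hx) as [eps [V [Heps [HV Himpl]]]].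
  destruct (nbhd_finite_inter OX HX x
              (fun i y => ((1 <= i)%nat -> Rabs (s y i - s x i) < eps) /\ V i (a y i)) n)
    as [O [HO [Ox HOP]]].
  { intros i Hi. destruct (HV i Hi) as [HVi Vxi].
    destruct (Ha i Hi (V i) HVi Vxi) as [O2 [HO2 [O2x HO2P]]].
    exists (fun y => Rabs (s y i - s x i) < eps /\ O2 y). split; [|split].
    - apply Hint; [apply (Hs i Hi _ (ball_open (s x i) eps))|exact HO2].
    - split; [|exact O2x]. replace (s x i - s x i) with 0 by ring. rewrite Rabs_R0; lra.
    - intros y [Hy O2y]. split; auto. }
  exists (fun y => O y /\ W y). split; [apply Hint; auto|split; [auto|]].
  intros y [Oy Wy]. destruct (Hrep y Wy) as [Hsy ->]. apply Himpl; [exact Hsy| |].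
  - intros j Hj. apply (HOP y Oy j); lia.
  - intros j Hj. apply (HOP y Oy j Hj).
Qed.

End Representation.

Theorem lemma5p6 (X : Type) (OX : (X -> Prop) -> Prop)
  (HX : is_topology OX) (Hmet : metrizable OX)
  (A : Type) (plus : A -> A -> A) (opp : A -> A) (zero : A)
  (OA : (A -> Prop) -> Prop)
  (HA : hausdorff_top_abelian_group plus opp zero OA)
  (f : X -> R -> A) (Hf : semi_layered OX OA f) :
  (forall x, in_EA zero (curryEA zero f x)) /\
  (forall U, EA_open zero OA U -> OX (fun x => U (curryEA zero f x))).
Proof.
  split.
  - intro x.
    destruct (local_layer_representation OX OA zero f HX Hf x)
      as [n [s [a [W [_ [Wx [Hrep _]]]]]]].
    destruct (Hrep x Wx) as [Hsx Heq].
    exists n, (s x), (a x). split; [exact Hsx|]. intro t. now rewrite Heq.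
  - intros U HU. apply (open_of_nbhds OX HX).
    exact (curry_preimage_nbhd OX OA zero f HX Hf U HU).
Qed.
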